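(* Let $k\ge1$, let $GP=GP(3k,k)$ and let $C_O$ be its outer cycle $u_0u_1\dots u_{3k-1}u_0$. Let $\phi:E(C_O)\to\{1,2,3\}$ be a proper edge colouring of $C_O$. Then the following are equivalent: (i) there is a proper edge colouring $\gamma:E(GP)\to\{1,2,3\}$ with $\gamma|_{E(C_O)}=\phi$; (ii) there is a permutation $(a,b,c)$ of $(1,2,3)$ such that for every $i=1,\dots,k$, the triples $\phi_i$ and $\phi_{i+1}$ are adjacent vertices in one of the graphs $T$ or $H$ (defined below with this choice of $a,b,c$). Furthermore, if a colouring $\gamma$ as in (i) exists, it is unique.
   Context: $GP(3k,k)$ has vertex set $\{u_i,v_i : i\in\mathbb{Z}_{3k}\}$ and edges $u_iu_{i+1}$, $u_iv_i$, $v_iv_{i+k}$ for $i\in\mathbb{Z}_{3k}$ (indices modulo $3k$). For a colouring $\phi$ of (at least) the outer cycle, set, for $i=1,\dots,k+1$, $\phi_i=(\phi(u_iu_{i+1}),\phi(u_{k+i}u_{k+i+1}),\phi(u_{2k+i}u_{2k+i+1}))$ with indices modulo $3k$ (so $\phi_{k+1}=(\phi(u_{k+1}u_{k+2}),\phi(u_{2k+1}u_{2k+2}),\phi(u_1u_2))$). A triple $(x,y,z)$ is written $xyz$. Given a permutation $(a,b,c)$ of $(1,2,3)$, $T$ is the triangle with vertices $abc$, $bca$, $cab$, and $H$ is the $6$-cycle $aba - bcc - aab - cbc - baa - ccb - aba$ on the six indicated triples. *)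

From mathcomp Require Import all_boot.
Set Implicit Arguments. Unset Strict Implicit. Unset Printing Implicit Defensive.

Definition is_colour (x : nat) : bool := (1 <= x <= 3).

(* Indices are taken modulo 3k.  An edge colouring of GP(3k,k) is encoded by
   three functions on edge indices i (0 <= i < 3k):
     go i = colour of the outer edge  u_i u_{i+1}
     gs i = colour of the spoke       u_i v_i
     gi i = colour of the inner edge  v_i v_{i+k}
   For k >= 1 these 9k edges are pairwise distinct, so this is exactly a map
   E(GP(3k,k)) -> {1,2,3}.  Similarly phi i = colour of u_i u_{i+1}. *)

Definition proper_outer (k : nat) (phi : nat -> nat) : Prop :=
  forall i, i < 3 * k ->
    is_colour (phi i) /\ phi i <> phi ((i + 1) %% (3 * k)).

Definition proper_GP (k : nat) (go gs gi : nat -> nat) : Prop :=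
  forall i, i < 3 * k ->
    [/\ is_colour (go i), is_colour (gs i), is_colour (gi i),
        (* vertex u_i : edges u_{i-1}u_i, u_iu_{i+1}, u_iv_i *)
        uniq [:: go ((i + 3 * k - 1) %% (3 * k)); go i; gs i] &
        (* vertex v_i : edges v_{i-k}v_i, v_iv_{i+k}, u_iv_i *)
        uniq [:: gi ((i + 2 * k) %% (3 * k)); gi i; gs i]].

Definition extends_GP (k : nat) (phi go gs gi : nat -> nat) : Prop :=
  proper_GP k go gs gi /\ (forall i, i < 3 * k -> go i = phi i).

Definition triple := (nat * nat * nat)%type.

Definition phit (k : nat) (phi : nat -> nat) (i : nat) : triple :=
  (phi (i %% (3 * k)), phi ((k + i) %% (3 * k)), phi ((2 * k + i) %% (3 * k))).

Definition is_perm3 (a b c : nat) : bool :=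
  perm_eq [:: a; b; c] [:: 1; 2; 3].

Definition adj_in (E : seq (triple * triple)) (x y : triple) : bool :=
  ((x, y) \in E) || ((y, x) \in E).

Definition T_edges (a b c : nat) : seq (triple * triple) :=
  [:: ((a, b, c), (b, c, a)); ((b, c, a), (c, a, b)); ((c, a, b), (a, b, c))].

Definition H_edges (a b c : nat) : seq (triple * triple) :=
  [:: ((a, b, a), (b, c, c)); ((b, c, c), (a, a, b)); ((a, a, b), (c, b, c));
      ((c, b, c), (b, a, a)); ((b, a, a), (c, c, b)); ((c, c, b), (a, b, a))].

Definition adj_T (a b c : nat) (x y : triple) : bool := adj_in (T_edges a b c) x y.
Definition adj_H (a b c : nat) (x y : triple) : bool := adj_in (H_edges a b c) x y.

From mathcomp Require Import all_boot zify.

Set Implicit Arguments.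
Unset Strict Implicit.
Unset Printing Implicit Defensive.

(* Every edge of an extension is forced.  The spoke at [u_i] gets the colour missing
   at [u_i] on the outer cycle, and the inner graph is the disjoint union of the
   triangles [v_x v_(x+k) v_(x+2k)]; a triangle with pendant edges is properly
   3-edge-coloured iff the pendant colours are distinct, and then each triangle edge
   gets the colour of the opposite pendant edge.  So [phi] extends, uniquely, iff
   the spokes at [u_(i+1)], [u_(k+i+1)], [u_(2k+i+1)] get distinct colours for every
   [i]; by periodicity it suffices to take [i = 1, ..., k].  That condition only
   involves [phi_i] and [phi_(i+1)], and a finite check shows that the relation it
   defines on colour triples is a disjoint union of copies of [T] and [H], so the
   walk [phi_1, ..., phi_(k+1)] stays in one of them. *)

Definition colours : seq nat := [:: 1; 2; 3].

Lemma colour_cases x : is_colour x -> [\/ x = 1, x = 2 | x = 3].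
Proof.
rewrite /is_colour => /andP[h1 h3].
have [->|[->|->]] : x = 1 \/ x = 2 \/ x = 3 by lia.
- exact: Or31.
- exact: Or32.
- exact: Or33.
Qed.

Lemma mem_colours x : is_colour x -> x \in colours.
Proof. by case/colour_cases=> ->. Qed.

Lemma third_colour a b c :
  is_colour a -> is_colour b -> is_colour c -> uniq [:: a; b; c] -> c = 6 - a - b.
Proof. by move=> /colour_cases[]-> /colour_cases[]-> /colour_cases[]->. Qed.

Lemma third_colourP a b : is_colour a -> is_colour b -> a <> b ->
  is_colour (6 - a - b) /\ uniq [:: a; b; 6 - a - b].
Proof. by move=> /colour_cases[]-> /colour_cases[]-> ab. Qed.

Definition colour_triples : seq triple :=
  [seq (xy, z) | xy <- [seq (x, y) | x <- colours, y <- colours], z <- colours].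

Lemma mem_colour_triples x y z :
  is_colour x -> is_colour y -> is_colour z -> (x, y, z) \in colour_triples.
Proof.
by move=> /mem_colours hx /mem_colours hy /mem_colours hz;
  apply: allpairs_f hz; apply: allpairs_f.
Qed.

Lemma all_colour_triplesP (P : pred triple) x y z : all P colour_triples ->
  is_colour x -> is_colour y -> is_colour z -> P (x, y, z).
Proof. by move=> /allP hP hx hy hz; apply/hP/mem_colour_triples. Qed.

Lemma is_perm3_colours a b c :
  is_perm3 a b c -> [/\ is_colour a, is_colour b & is_colour c].
Proof.
have col x : x \in [:: 1; 2; 3] -> is_colour x by rewrite !inE => /or3P[]/eqP->.
by move=> /perm_mem h; split; apply: col; rewrite -h !inE eqxx ?orbT.
Qed.

Lemma all_perm3P (P : nat -> nat -> nat -> bool) :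
  all (fun '(a, b, c) => is_perm3 a b c ==> P a b c) colour_triples ->
  forall a b c, is_perm3 a b c -> P a b c.
Proof.
move=> hP a b c habc; have [ha hb hc] := is_perm3_colours habc.
by have /implyP := all_colour_triplesP hP ha hb hc; apply.
Qed.

(* [p] and [q] are the colours of three outer edges [u_j u_(j+1)] at positions
   [j = i, k + i, 2k + i] and of their successors; [6 - p_t - q_t] is then the
   colour forced on the spoke between them. *)
Definition compatible (p q : triple) : bool :=
  let: (p1, p2, p3) := p in let: (q1, q2, q3) := q in
  [&& all is_colour [:: p1; p2; p3; q1; q2; q3], p1 != q1, p2 != q2, p3 != q3 &
      uniq [:: 6 - p1 - q1; 6 - p2 - q2; 6 - p3 - q3]].

Lemma compatible_colours p1 p2 p3 q1 q2 q3 : compatible (p1, p2, p3) (q1, q2, q3) ->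
  [/\ is_colour p1, is_colour p2 & is_colour p3] /\
  [/\ is_colour q1, is_colour q2 & is_colour q3].
Proof. by case/andP=> /and5P[? ? ? ? /and3P[]]. Qed.

Lemma compatible_sym p q : compatible p q = compatible q p.
Proof.
case: p q => [[p1 p2] p3] [[q1 q2] q3]; rewrite /compatible.
rewrite -!subnDA [q1 + _]addnC [q2 + _]addnC [q3 + _]addnC
  [q1 == _]eq_sym [q2 == _]eq_sym [q3 == _]eq_sym.
congr (_ && _); apply: perm_all.
by rewrite (perm_catC [:: p1; p2; p3]).
Qed.

Definition TH_edges a b c : seq (triple * triple) := T_edges a b c ++ H_edges a b c.

Definition TH_vertices a b c : seq triple := map fst (TH_edges a b c).

Definition adj_TH a b c (p q : triple) : bool := adj_T a b c p q || adj_H a b c p q.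

Lemma adj_THE a b c p q :
  adj_TH a b c p q = ((p, q) \in TH_edges a b c) || ((q, p) \in TH_edges a b c).
Proof.
rewrite /adj_TH /adj_T /adj_H /adj_in /TH_edges !mem_cat.
by case: ((p, q) \in _) ((p, q) \in _) ((q, p) \in _) ((q, p) \in _) => [] [] [] [].
Qed.

(* Both T and H are listed as cycles, so second endpoints are a rotation of the
   first ones. *)
Lemma adj_TH_vertices a b c p q : adj_TH a b c p q -> q \in TH_vertices a b c.
Proof.
have snd_fst (E : seq (triple * triple)) e :
    map snd E = rot 1 (map fst E) -> e \in E -> e.2 \in map fst E.
  by move=> hE /(map_f snd); rewrite hE mem_rot.
rewrite adj_THE => /orP[] he; last exact: (map_f fst he).
move: he; rewrite /TH_vertices /TH_edges map_cat !mem_cat.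
by case/orP=> /(snd_fst _ (p, q)) /= -> //; rewrite orbT.
Qed.

Lemma adj_TH_compatible a b c p q :
  is_perm3 a b c -> adj_TH a b c p q -> compatible p q.
Proof.
have check : all (fun '(a, b, c) => is_perm3 a b c ==>
    all (fun e => compatible e.1 e.2) (TH_edges a b c)) colour_triples.
  by vm_compute.
move=> /(all_perm3P check) /allP hE; rewrite adj_THE => /orP[] /hE //=.
by rewrite compatible_sym.
Qed.

Lemma compatible_adj_TH a b c p q : is_perm3 a b c ->
  p \in TH_vertices a b c -> compatible p q -> adj_TH a b c p q.
Proof.
have check : all (fun '(a, b, c) => is_perm3 a b c ==>
    all (fun p => all (fun q => compatible p q ==> adj_TH a b c p q) colour_triples)
      (TH_vertices a b c)) colour_triples.
  by vm_compute.
move=> /(all_perm3P check) /allP hV /hV {}hV.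
case: p q hV => [[p1 p2] p3] [[q1 q2] q3] hV hpq.
have [_ [h1 h2 h3]] := compatible_colours hpq.
by have /implyP := all_colour_triplesP hV h1 h2 h3; apply.
Qed.

Lemma compatible_TH_vertex p q : compatible p q ->
  exists a b c, is_perm3 a b c /\ p \in TH_vertices a b c.
Proof.
have check : all (fun p => all (fun q => compatible p q ==>
    has (fun '(a, b, c) => is_perm3 a b c && (p \in TH_vertices a b c)) colour_triples)
      colour_triples) colour_triples.
  by vm_compute.
case: p q => [[p1 p2] p3] [[q1 q2] q3] hpq.
have [[h1 h2 h3] [h4 h5 h6]] := compatible_colours hpq.
have /implyP/(_ hpq)/hasP[[[a b] c] _ /andP[habc hp]] :=
  all_colour_triplesP (all_colour_triplesP check h1 h2 h3) h4 h5 h6.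
by exists a, b, c.
Qed.

Lemma walk_in_closed_class (T : Type) (V : pred T) (r e : rel T) (s : nat -> T) n :
  (forall p q, V p -> r p q -> e p q) -> (forall p q, e p q -> V q) ->
  V (s 1) -> (forall i, 1 <= i <= n -> r (s i) (s i.+1)) ->
  forall i, 1 <= i <= n -> e (s i) (s i.+1).
Proof.
move=> re eV V1 rs.
suff Vs i : 1 <= i <= n -> V (s i) by move=> i hi; apply: re (Vs i hi) (rs i hi).
elim: i => [//|[_ //|i] IH] /andP[_ hi].
have hi' : 1 <= i.+1 <= n by exact: ltnW.
exact: eV (re _ _ (IH hi') (rs _ hi')).
Qed.

Lemma compatible_walkP (s : nat -> triple) n :
  (forall i, 1 <= i <= n -> compatible (s i) (s i.+1)) <->
  (exists a b c, is_perm3 a b c /\ forall i, 1 <= i <= n ->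
     adj_T a b c (s i) (s i.+1) \/ adj_H a b c (s i) (s i.+1)).
Proof.
split=> [hs | [a [b [c [habc hs]]]] i hi]; last first.
  by apply: adj_TH_compatible habc _; rewrite /adj_TH; case: (hs i hi) => ->; rewrite ?orbT.
case: n hs => [_ | n hs]; first by exists 1, 2, 3; split=> // i /andP[]; lia.
have [a [b [c [habc hs1]]]] := compatible_TH_vertex (hs 1 isT).
exists a, b, c; split=> // i hi.
have /orP := walk_in_closed_class (V := fun p => p \in TH_vertices a b c)
  (fun p q => @compatible_adj_TH a b c p q habc) (@adj_TH_vertices a b c) hs1 hs hi.
by case=> ->; [left | right].
Qed.

(* The colour forced on the spoke [u_j v_j]: for distinct colours [a] and [b] of the
   outer edges at [u_j], [6 - a - b] is the third one. *)
Definition spoke_colour k (phi : nat -> nat) j : nat :=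
  6 - phi ((j %% (3 * k) + (3 * k - 1)) %% (3 * k)) - phi (j %% (3 * k)).

Definition spokes_distinct k (phi : nat -> nat) y : bool :=
  uniq [:: spoke_colour k phi y; spoke_colour k phi (y + k); spoke_colour k phi (y + 2 * k)].

Lemma spoke_colour_mod k phi y y' :
  y = y' %[mod 3 * k] -> spoke_colour k phi y = spoke_colour k phi y'.
Proof. by rewrite /spoke_colour => ->. Qed.

Lemma spoke_colour_succ k phi j : 0 < k ->
  spoke_colour k phi j.+1 = 6 - phi (j %% (3 * k)) - phi (j.+1 %% (3 * k)).
Proof.
move=> hk; rewrite /spoke_colour modnDml.
by rewrite (_ : j.+1 + (3 * k - 1) = j + 3 * k) ?modnDr //; lia.
Qed.

Lemma proper_outer_succ k phi j : 0 < k -> proper_outer k phi ->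
  [/\ is_colour (phi (j %% (3 * k))), is_colour (phi (j.+1 %% (3 * k))) &
      phi (j %% (3 * k)) != phi (j.+1 %% (3 * k))].
Proof.
move=> hk hphi; have hn : 0 < 3 * k by lia.
have [c1 /eqP n1] := hphi _ (ltn_pmod j hn).
have [c2 _] := hphi _ (ltn_pmod j.+1 hn).
by rewrite modnDml addn1 in n1.
Qed.

Lemma spoke_colourP k phi i : 0 < k -> proper_outer k phi -> i < 3 * k ->
  is_colour (spoke_colour k phi i) /\
  uniq [:: phi ((i + 3 * k - 1) %% (3 * k)); phi i; spoke_colour k phi i].
Proof.
move=> hk hphi hi; have hn : 0 < 3 * k by lia.
have [_ _] := proper_outer_succ (i + 3 * k - 1) hk hphi.
rewrite (_ : (i + 3 * k - 1).+1 = i + 3 * k); last lia.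
rewrite modnDr (modn_small hi) => /eqP ne.
have [ca _] := hphi _ (ltn_pmod (i + 3 * k - 1) hn).
have [ci _] := hphi _ hi.
rewrite /spoke_colour (modn_small hi) (_ : i + (3 * k - 1) = i + 3 * k - 1); last lia.
exact: third_colourP.
Qed.

(* A triangle [v_x v_y v_z] whose edges [v_x v_y], [v_y v_z], [v_z v_x] have
   colours [gx], [gy], [gz], with pendant edges of colours [sx], [sy], [sz]. *)
Lemma triangle_pendant_colours gx gy gz sx sy sz :
  is_colour gx -> is_colour gy -> is_colour gz ->
  is_colour sx -> is_colour sy -> is_colour sz ->
  uniq [:: gz; gx; sx] -> uniq [:: gx; gy; sy] -> uniq [:: gy; gz; sz] ->
  gx = sz /\ uniq [:: sx; sy; sz].
Proof. by do 6![move=> /colour_cases[]->]. Qed.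

Lemma extends_GP_spokes k phi go gs gi : 0 < k -> proper_outer k phi ->
  extends_GP k phi go gs gi -> forall x, x < 3 * k ->
  [/\ gs x = spoke_colour k phi x, gi x = spoke_colour k phi (x + 2 * k) &
      spokes_distinct k phi x].
Proof.
move=> hk hphi [hGP hgo]; have hn : 0 < 3 * k by lia.
have gsE x : x < 3 * k -> gs x = spoke_colour k phi x.
  move=> hx; have [_ cgs _ ux _] := hGP x hx.
  have [cs us] := spoke_colourP hk hphi hx.
  have hpx : (x + 3 * k - 1) %% (3 * k) < 3 * k by exact: ltn_pmod.
  rewrite !hgo // in ux.
  have [cp _] := hphi _ hpx; have [cx _] := hphi _ hx.
  by rewrite (third_colour cp cx cgs ux) (third_colour cp cx cs us).
move=> x hx.
set y := (x + k) %% (3 * k); set z := (x + 2 * k) %% (3 * k).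
have hy : y < 3 * k by exact: ltn_pmod.
have hz : z < 3 * k by exact: ltn_pmod.
have ey : (y + 2 * k) %% (3 * k) = x.
  by rewrite modnDml (_ : x + k + 2 * k = x + 3 * k) ?modnDr ?modn_small //; lia.
have ez : (z + 2 * k) %% (3 * k) = y.
  by rewrite modnDml (_ : x + 2 * k + 2 * k = x + k + 3 * k) ?modnDr //; lia.
have [_ cx gx _ ux] := hGP x hx.
have [_ cy gy _ uy] := hGP y hy.
have [_ cz gz _ uz] := hGP z hz.
rewrite ey in uy; rewrite ez in uz.
have [-> u] := triangle_pendant_colours gx gy gz cx cy cz ux uy uz.
rewrite !gsE // /y /z !(@spoke_colour_mod k phi (_ %% _) _ (modn_mod _ _)) in u *.
by split.
Qed.

Lemma spokes_distinct_addk k phi y :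
  spokes_distinct k phi (y + k) = spokes_distinct k phi y.
Proof.
rewrite /spokes_distinct (_ : y + k + k = y + 2 * k); last lia.
rewrite (@spoke_colour_mod k phi (y + k + 2 * k) y); first by rewrite -[RHS](rot_uniq 1).
by rewrite (_ : y + k + 2 * k = y + 3 * k) ?modnDr //; lia.
Qed.

Lemma spokes_distinct_modk k phi y :
  spokes_distinct k phi y = spokes_distinct k phi (y %% k).
Proof.
rewrite {1}(divn_eq y k) addnC; elim: (y %/ k) => [|m IH]; first by rewrite addn0.
by rewrite mulSn addnCA addnC spokes_distinct_addk.
Qed.

Lemma spokes_distinct_everywhere k phi : 0 < k ->
  (forall j, spokes_distinct k phi j) <->
  (forall i, 1 <= i <= k -> spokes_distinct k phi i.+1).
Proof.
move=> hk; split=> [h i _ | h j]; first exact: h.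
set i := (j + 2 * k - 2) %% k + 1.
have hi : 1 <= i <= k by rewrite /i; have := ltn_pmod (j + 2 * k - 2) hk; lia.
have ei : i.+1 %% k = j %% k.
  have -> : i.+1 = (j + 2 * k - 2) %% k + 2 by rewrite /i; lia.
  rewrite modnDml (_ : j + 2 * k - 2 + 2 = 2 * k + j); last lia.
  by rewrite modnMDl.
by rewrite spokes_distinct_modk -ei -spokes_distinct_modk; exact: h.
Qed.

Lemma extends_GPP k phi : 0 < k -> proper_outer k phi ->
  (exists go gs gi, extends_GP k phi go gs gi) <-> forall j, spokes_distinct k phi j.
Proof.
move=> hk hphi; have hn : 0 < 3 * k by lia.
split=> [[go [gs [gi h]]] j | hsd].
  rewrite spokes_distinct_modk -(modn_dvdm j (dvdn_mull 3 (dvdnn k))).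
  rewrite -spokes_distinct_modk.
  by have [_ _] := extends_GP_spokes hk hphi h (ltn_pmod j hn).
exists phi, (spoke_colour k phi), (fun j => spoke_colour k phi (j + 2 * k)).
split=> // i hi.
have [cs us] := spoke_colourP hk hphi hi.
have [cs2 _] := spoke_colourP hk hphi (ltn_pmod (i + 2 * k) hn).
rewrite (spoke_colour_mod _ (modn_mod _ _)) in cs2.
have -> : spoke_colour k phi ((i + 2 * k) %% (3 * k) + 2 * k) = spoke_colour k phi (i + k).
  apply: spoke_colour_mod.
  by rewrite modnDml (_ : i + 2 * k + 2 * k = i + k + 3 * k) ?modnDr //; lia.
have := hsd i; rewrite /spokes_distinct -(rot_uniq 1) => hu.
by split=> //; case: (hphi i hi).
Qed.

Lemma compatible_phit k phi i : 0 < k -> proper_outer k phi ->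
  compatible (phit k phi i) (phit k phi i.+1) = spokes_distinct k phi i.+1.
Proof.
move=> hk hphi.
rewrite /spokes_distinct !addSn (addnC i k) (addnC i (2 * k)) !spoke_colour_succ //.
rewrite /phit /compatible !addnS /=.
have [a1 b1 c1] := proper_outer_succ i hk hphi.
have [a2 b2 c2] := proper_outer_succ (k + i) hk hphi.
have [a3 b3 c3] := proper_outer_succ (2 * k + i) hk hphi.
by rewrite a1 b1 c1 a2 b2 c2 a3 b3 c3.
Qed.

Theorem lemma3 (k : nat) (hk : 1 <= k) (phi : nat -> nat)
    (hphi : proper_outer k phi) :
  ((exists go gs gi : nat -> nat, extends_GP k phi go gs gi) <->
   (exists a b c : nat, is_perm3 a b c /\
      forall i, 1 <= i <= k ->
        adj_T a b c (phit k phi i) (phit k phi i.+1) \/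
        adj_H a b c (phit k phi i) (phit k phi i.+1)))
  /\
  (forall go gs gi go' gs' gi' : nat -> nat,
      extends_GP k phi go gs gi -> extends_GP k phi go' gs' gi' ->
      forall i, i < 3 * k -> [/\ go i = go' i, gs i = gs' i & gi i = gi' i]).
Proof.
split.
  apply: iff_trans (extends_GPP hk hphi) _.
  apply: iff_trans (spokes_distinct_everywhere _ hk) _.
  apply: iff_trans (compatible_walkP _ _).
  by split=> h i /h; rewrite compatible_phit.
move=> go gs gi go' gs' gi' h h' i hi.
have [-> -> _] := extends_GP_spokes hk hphi h hi.
have [-> -> _] := extends_GP_spokes hk hphi h' hi.
by rewrite h.2 // h'.2.
Qed.
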